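(* If $A\subseteq\omega$ is c.e. and has density $1$ effectively, then $A$ has a computable subset $B$ which has density $1$ effectively.
   Context: For $S\subseteq\omega$ and $n>0$, $\rho_n(S)=|S\cap[0,n)|/n$. For a set $A$ of density $1$ (i.e. $\lim_n\rho_n(A)=1$), a function $w:\omega\to\omega$ witnesses that $A$ has density $1$ if for all $k$ and all $n\ge w(k)$, $\rho_n(A)\ge 1-2^{-k}$. The set $A$ has density $1$ effectively if there is a computable function which witnesses that $A$ has density $1$. *)

From mathcomp Require Import all_boot all_order all_algebra.
Set Implicit Arguments. Unset Strict Implicit. Unset Printing Implicit Defensive.
Import Order.TTheory GRing.Theory Num.Theory.

(* Syntax of partial recursive function codes (arity given by the argument list). *)
Inductive code : Type :=
| Zero : code
| Succ : code
| Proj : nat -> code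
| Comp : code -> list code -> code
| Prec : code -> code -> code
| Mu   : code -> code.

Inductive ev : code -> seq nat -> nat -> Prop :=
| ev_zero v : ev Zero v 0
| ev_succ x v : ev Succ (x :: v) x.+1
| ev_proj i v : (i < size v)%N -> ev (Proj i) v (nth 0%N v i)
| ev_comp f gs v ys y : evs gs v ys -> ev f ys y -> ev (Comp f gs) v y
| ev_prec0 f g v y : ev f v y -> ev (Prec f g) (0%N :: v) y
| ev_precS f g n v z y :
    ev (Prec f g) (n :: v) z -> ev g (n :: z :: v) y -> ev (Prec f g) (n.+1 :: v) y
| ev_mu f v n :
    ev f (n :: v) 0 -> (forall m, (m < n)%N -> exists k, ev f (m :: v) k.+1) ->
    ev (Mu f) v n
with evs : list code -> seq nat -> seq nat -> Prop :=
| evs_nil v : evs nil v [::]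
| evs_cons g gs v y ys : ev g v y -> evs gs v ys -> evs (g :: gs) v (y :: ys).

Definition computable (f : nat -> nat) : Prop :=
  exists c, forall x, ev c [:: x] (f x).

(* Subsets of omega are represented by (classical) boolean predicates;
   no computability is implied by this representation. *)
Definition computable_set (B : pred nat) : Prop :=
  computable (fun x => nat_of_bool (B x)).

Definition ce (A : pred nat) : Prop :=
  exists c, forall x, A x <-> exists y, ev c [:: x] y.

Local Open Scope ring_scope.

Definition rho (n : nat) (S : pred nat) : rat :=
  (count S (iota 0 n))%:R / n%:R.

Definition has_density1 (S : pred nat) : Prop :=
  forall eps : rat, 0 < eps -> exists N : nat, forall n : nat,
    (0 < n)%N -> (N <= n)%N -> `|rho n S - 1| < eps.

Definition witnesses_density1 (w : nat -> nat) (S : pred nat) : Prop :=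
  forall k n : nat, (0 < n)%N -> (w k <= n)%N -> 1 - (2%:R ^+ k)^-1 <= rho n S.

Definition density1_effectively (S : pred nat) : Prop :=
  has_density1 S /\ exists w, computable w /\ witnesses_density1 w S.

(* Let c be a code whose domain is A.  Running c with a step budget s gives
   approximations A_s of A that are uniformly computable in (s, x), increase with s
   and exhaust A; the budgeted interpreter is itself partial recursive.  Let w witness
   that A has density 1, and put W_0 = 0, W_(k+1) = 2^k W_k + w k + 1.  For every k
   some stage t_k makes A_(t_k) (1 - 2^-k)-dense at every point of the block
   [W_(k+1), W_(k+2)); this is a decidable property of the stage, so the least such
   t_k is computable.  Then B = {x | x \in A_(t_0 + ... + t_x)} is a computable subset
   of A.  On the block of index j, B contains A_(t_j) above W_j, and the loss W_j is at
   most 2^-j W_(j+1), so K |-> W_(K+2) witnesses that B has density 1. *)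

From mathcomp Require Import all_boot all_order all_algebra zify.
From Stdlib Require List.
Set Implicit Arguments. Unset Strict Implicit. Unset Printing Implicit Defensive.

(** * Step-bounded evaluation *)

Inductive search_state := Searching | Stuck | Found of nat.

Fixpoint search (r : nat -> option nat) (j : nat) : search_state :=
  if j is i.+1 then
    if search r i is Searching then
      match r i with Some 0 => Found i | Some _ => Searching | None => Stuck end
    else search r i
  else Searching.

Fixpoint all_some (os : seq (option nat)) : option (seq nat) :=
  if os is o :: os' then
    if (o, all_some os') is (Some y, Some ys) then Some (y :: ys) else None
  else Some [::].

Fixpoint prec_run (base : option nat) (step : nat -> nat -> option nat) (n : nat) :=
  if n is m.+1 then obind (step m) (prec_run base step m) else base.

(* Every minimisation searches below [s] only; [None] means that the budget ran out
   (or that the arguments are ill-formed). *)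
Fixpoint run (s : nat) (c : code) (v : seq nat) {struct c} : option nat :=
  match c with
  | Zero => Some 0
  | Succ => if v is x :: _ then Some x.+1 else None
  | Proj i => if i < size v then Some (nth 0 v i) else None
  | Comp f gs => obind (run s f) (all_some (map (fun g => run s g v) gs))
  | Prec f g =>
      if v is n :: v' then prec_run (run s f v') (fun m z => run s g [:: m, z & v']) n
      else None
  | Mu f => if search (fun m => run s f (m :: v)) s is Found m then Some m else None
  end.

Definition code_nested_ind (P : code -> Prop) (PZ : P Zero) (PS : P Succ)
    (PP : forall i, P (Proj i))
    (PC : forall f gs, P f -> List.Forall P gs -> P (Comp f gs))
    (PR : forall f g, P f -> P g -> P (Prec f g)) (PM : forall f, P f -> P (Mu f)) :
    forall c, P c :=
  fix F c := match c with
  | Zero => PZ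
  | Succ => PS
  | Proj i => PP i
  | Comp f gs =>
      let fix Fs gs := match gs return List.Forall P gs with
        | nil => List.Forall_nil _
        | g :: gs' => List.Forall_cons _ (F g) (Fs gs')
        end in
      PC f gs (F f) (Fs gs)
  | Prec f g => PR f g (F f) (F g)
  | Mu f => PM f (F f)
  end.

Section Search.
Variable r : nat -> option nat.

Definition positive_below j := forall m, m < j -> exists k, r m = Some k.+1.

Lemma positive_belowS j :
  positive_below j.+1 <-> positive_below j /\ exists k, r j = Some k.+1.
Proof.
split=> [pos | [pos [k rj]] m]; last first.
  by rewrite ltnS leq_eqVlt => /predU1P[->|/pos]; [exists k|].
by split=> [m lt_mj|]; apply: pos => //; apply: ltnW.
Qed.

Lemma search_SearchingE j : search r j = Searching <-> positive_below j.
Proof.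
elim: j => [|j IHj] /=; first by split=> // _ m.
rewrite positive_belowS -IHj.
case: (search r j) => [||i]; try by split=> [|[]].
case: (r j) => [[|k]|]; split=> //; try by case=> _ [].
by split=> //; exists k.
Qed.

Lemma search_FoundE j m :
  search r j = Found m <-> [/\ m < j, r m = Some 0 & positive_below m].
Proof.
elim: j => [|j IHj] /=; first by split=> // -[].
split=> [|[lt_mj rm0 pos]].
  case Ej: (search r j) IHj => [||i] IHj //.
    have pos := proj1 (search_SearchingE j) Ej.
    by case Er: (r j) => [[|k]|] // [<-].
  by case/IHj=> lt_ij *; split=> //; apply: ltnW.
move: lt_mj; rewrite ltnS leq_eqVlt => /predU1P[eq_mj|lt_mj].
  by rewrite -eq_mj (proj2 (search_SearchingE m) pos) rm0.
by rewrite (proj2 IHj).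
Qed.

End Search.

Lemma all_someP os ys : all_some os = Some ys <-> os = map Some ys.
Proof.
split=> [|->]; last by elim: ys => //= y ys ->.
elim: os ys => [|[z|] os IHos] ys /=; first by case=> <-.
  by case Eos: (all_some os) => [zs|] // [<-]; rewrite (IHos _ Eos).
by [].
Qed.

Lemma run_sound c s v y : run s c v = Some y -> ev c v y.
Proof.
elim/code_nested_ind: c s v y.
- by move=> s v y [<-]; constructor.
- by move=> s [|x v] y //= [<-]; constructor.
- by move=> i s v y /=; case: ifP => // lt_iv [<-]; constructor.
- move=> f gs IHf IHgs s v y /=.
  case Egs: (all_some _) => [ys|] //= /IHf; apply: ev_comp.
  move/all_someP: Egs; elim: IHgs ys => [|g gs' IHg _ IH] [|y' ys] //=.
    by constructor.
  by case=> /IHg evg /IH evgs; constructor.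
- move=> f g IHf IHg s [|n v] y //=.
  elim: n y => [|n IHn] y /=; first by move/IHf; constructor.
  case En: (prec_run _ _ n) => [z|] //= /IHg.
  exact: ev_precS (IHn _ En).
- move=> f IHf s v y /=.
  case Es: (search _ _) => [||m] //= [<-].
  case/search_FoundE: Es => _ /IHf ev0 pos.
  by constructor=> // m' /pos [k /IHf]; exists k.
Qed.

Lemma prec_run_mono base base' step step' n y :
  (forall y, base = Some y -> base' = Some y) ->
  (forall m z y, step m z = Some y -> step' m z = Some y) ->
  prec_run base step n = Some y -> prec_run base' step' n = Some y.
Proof.
move=> base_mono step_mono; elim: n y => [|n IHn] y /=; first exact: base_mono.
by case En: (prec_run base step n) => [z|] //= /step_mono; rewrite (IHn _ En).
Qed.

Lemma run_Mu s f v m :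
  m < s -> run s f (m :: v) = Some 0 -> positive_below (fun m => run s f (m :: v)) m ->
  run s (Mu f) v = Some m.
Proof. by move=> lt_ms Em pos; rewrite /= (proj2 (search_FoundE _ _ _) (And3 lt_ms Em pos)). Qed.

Lemma run_mono c s s' v y : s <= s' -> run s c v = Some y -> run s' c v = Some y.
Proof.
move=> le_ss'; elim/code_nested_ind: c v y => //.
- move=> f gs IHf IHgs v y /=.
  case Egs: (all_some _) => [ys|] //= /IHf.
  suff /all_someP -> : map (fun g => run s' g v) gs = map Some ys by [].
  move/all_someP: Egs; elim: IHgs ys => [|g gs' IHg _ IH] [|y' ys] //=.
  by case=> /IHg -> /IH ->.
- by move=> f g IHf IHg [|n v] y //=; apply: prec_run_mono => [y'|m z y']; [apply: IHf|apply: IHg].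
- move=> f IHf v y /=.
  case Es: (search _ _) => [||m] //= [<-].
  case/search_FoundE: Es => lt_ms /IHf ev0 pos.
  apply: run_Mu => //; first exact: leq_trans lt_ms le_ss'.
  by move=> m' /pos [k /IHf]; exists k.
Qed.

Lemma uniform_stage (P : nat -> nat -> Prop) n :
  (forall s s' m, s <= s' -> P s m -> P s' m) ->
  (forall m, m < n -> exists s, P s m) -> exists s, forall m, m < n -> P s m.
Proof.
move=> P_mono; elim: n => [|n IHn] stages; first by exists 0.
have [s Ps] := IHn (fun m lt_mn => stages m (ltnW lt_mn)).
have [s' Ps'] := stages n (ltnSn n).
exists (maxn s s') => m; rewrite ltnS leq_eqVlt => /predU1P[->|lt_mn].
  exact: P_mono (leq_maxr _ _) Ps'.
exact: P_mono (leq_maxl _ _) (Ps _ lt_mn).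
Qed.

Lemma map_run_mono gs s s' v ys : s <= s' ->
  map (fun g => run s g v) gs = map Some ys -> map (fun g => run s' g v) gs = map Some ys.
Proof.
move=> le_ss'; elim: gs ys => [|g gs IHgs] [|y ys] //=.
by case=> /(run_mono le_ss') -> /IHgs ->.
Qed.

Fixpoint run_complete c v y (evc : ev c v y) : exists s, run s c v = Some y
with map_run_complete gs v ys (evgs : evs gs v ys) :
  exists s, map (fun g => run s g v) gs = map Some ys.
Proof.
- case: c v y / evc => [v|x v|i v lt_iv|f gs v ys y evgs evf|f g v y evf
    |f g n v z y evn evg|f v n ev0 pos].
  + by exists 0.
  + by exists 0.
  + by exists 0; rewrite /= lt_iv.
  + have [s1 Egs] := map_run_complete _ _ _ evgs; have [s2 Ef] := run_complete _ _ _ evf.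
    exists (maxn s1 s2) => /=.
    rewrite (proj2 (all_someP _ _) (map_run_mono (leq_maxl s1 s2) Egs)) /=.
    exact: run_mono (leq_maxr s1 s2) Ef.
  + exact: run_complete _ _ _ evf.
  + have [s1 En] := run_complete _ _ _ evn; have [s2 Eg] := run_complete _ _ _ evg.
    exists (maxn s1 s2); have /= -> := run_mono (leq_maxl s1 s2) En.
    exact: run_mono (leq_maxr s1 s2) Eg.
  + have [s0 E0] := run_complete _ _ _ ev0.
    have [S posS] : exists S, positive_below (fun m => run S f (m :: v)) n.
      apply: uniform_stage => [s s' m le_ss' [k Ek]|m /pos [k /run_complete [s Ek]]].
        by exists k; apply: run_mono le_ss' Ek.
      by exists s, k.
    exists (maxn (maxn s0 S) n.+1); apply: run_Mu; first exact: leq_maxr.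
      exact: run_mono (leq_trans (leq_maxl _ _) (leq_maxl _ _)) E0.
    move=> m /posS [k Ek]; exists k.
    exact: run_mono (leq_trans (leq_maxr _ _) (leq_maxl _ _)) Ek.
- case: gs v ys / evgs => [v|g gs v y ys evg evgs]; first by exists 0.
  have [s1 Eg] := run_complete _ _ _ evg; have [s2 Egs] := map_run_complete _ _ _ evgs.
  exists (maxn s1 s2) => /=; rewrite (run_mono (leq_maxl s1 s2) Eg).
  by rewrite (map_run_mono (leq_maxr s1 s2) Egs).
Qed.

(** * Computable functions of several arguments *)

Definition computable_n n (f : seq nat -> nat) :=
  exists c, forall v, size v = n -> ev c v (f v).

Lemma size1 (v : seq nat) : size v = 1 -> v = [:: nth 0 v 0].
Proof. by case: v => [|a []]. Qed.

Lemma size2 (v : seq nat) : size v = 2 -> v = [:: nth 0 v 0; nth 0 v 1].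
Proof. by case: v => [|a [|b []]]. Qed.

Lemma computable_n1 f : computable_n 1 (fun v => f (nth 0 v 0)) <-> computable f.
Proof.
split=> -[c evc]; exists c; first by move=> x; apply: (evc [:: x]).
by move=> v /size1 ->; apply: evc.
Qed.

Section ComputableClosure.
Variable n : nat.
Implicit Types (f g h : seq nat -> nat).

Lemma computable_n_ext f g :
  computable_n n f -> (forall v, size v = n -> f v = g v) -> computable_n n g.
Proof. by move=> [c evc] eq_fg; exists c => v sv; rewrite -eq_fg //; apply: evc. Qed.

Lemma computable_n_comp F fs : computable_n (size fs) F -> List.Forall (computable_n n) fs ->
  computable_n n (fun v => F (map (fun f => f v) fs)).
Proof.
move=> [cF evF] cfs.
have [gs evgs] : exists gs, forall v, size v = n -> evs gs v (map (fun f => f v) fs).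
  elim: cfs => [|f fs' [cf evf] _ [gs evgs]]; first by exists nil => v _; constructor.
  by exists (cf :: gs) => v sv; constructor; [apply: evf | apply: evgs].
by exists (Comp cF gs) => v sv; apply: ev_comp (evgs v sv) _; apply: evF; rewrite size_map.
Qed.

Lemma computable_n_const k : computable_n n (fun _ => k).
Proof.
elim: k => [|k [c evc]]; first by exists Zero => v _; constructor.
by exists (Comp Succ [:: c]) => v sv; apply: ev_comp (ev_succ _ _); do !constructor; apply: evc.
Qed.

Lemma computable_n_proj i : i < n -> computable_n n (fun v => nth 0 v i).
Proof. by move=> lt_in; exists (Proj i) => v sv; constructor; rewrite sv. Qed.

Lemma computable_n_projs k m : k + m <= n ->
  List.Forall (computable_n n) (map (fun i v => nth 0 v i) (iota k m)).
Proof.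
elim: m k => [|m IHm] k le_n /=; constructor; first by apply: computable_n_proj; lia.
by apply: IHm; lia.
Qed.

Lemma computable_n_drop k F fs : k <= n ->
  computable_n (size fs + (n - k)) F -> List.Forall (computable_n n) fs ->
  computable_n n (fun v => F (map (fun f => f v) fs ++ drop k v)).
Proof.
move=> le_kn cF cfs.
have := @computable_n_comp F (fs ++ map (fun i v => nth 0 v i) (iota k (n - k))).
rewrite size_cat size_map size_iota => /(_ cF); case.
  by apply/List.Forall_app; split=> //; apply: computable_n_projs; lia.
move=> c evc; exists c => v sv; have := evc v sv.
by rewrite map_cat -map_comp map_nth_iota ?sv // take_oversize // size_drop sv.
Qed.

Lemma computable_n_app1 (op : nat -> nat) f :
  computable_n 1 (fun v => op (nth 0 v 0)) -> computable_n n f ->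
  computable_n n (fun v => op (f v)).
Proof. by move=> cop cf; apply: (computable_n_comp (fs := [:: f]) cop); constructor. Qed.

Lemma computable_n_app2 (op : nat -> nat -> nat) f g :
  computable_n 2 (fun v => op (nth 0 v 0) (nth 0 v 1)) -> computable_n n f ->
  computable_n n g -> computable_n n (fun v => op (f v) (g v)).
Proof. by move=> cop cf cg; apply: (computable_n_comp (fs := [:: f; g]) cop); do !constructor. Qed.

End ComputableClosure.

Lemma computable_n_behead n f : computable_n n f -> computable_n n.+1 (fun u => f (behead u)).
Proof.
move=> cf; have := @computable_n_drop n.+1 1 f [::] isT; rewrite subSS subn0.
by move=> /(_ cf (List.Forall_nil _))/computable_n_ext; apply=> -[|x v] //= _; rewrite drop0.
Qed.

Lemma computable_n_iteri n F G : computable_n n F -> computable_n n.+2 G ->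
  computable_n n.+1
    (fun v => iteri (head 0 v) (fun m acc => G [:: m, acc & behead v]) (F (behead v))).
Proof.
move=> [cF evF] [cG evG]; exists (Prec cF cG) => -[|x v] //= [sv].
elim: x => [|x IHx] /=; first by constructor; apply: evF.
by apply: ev_precS IHx _; apply: evG; rewrite /= sv.
Qed.

Lemma computable_n_mu n F f : computable_n n.+1 F ->
  (forall v, size v = n -> F (f v :: v) = 0 /\ forall m, m < f v -> F (m :: v) != 0) ->
  computable_n n f.
Proof.
move=> [c evc] min_f; exists (Mu c) => v sv; have [F0 Fpos] := min_f v sv.
constructor; first by rewrite -F0; apply: evc; rewrite /= sv.
move=> m /Fpos; case EF: (F (m :: v)) => [|k] // _.
by exists k; rewrite -EF; apply: evc; rewrite /= sv.
Qed.

Section Arithmetic.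
Implicit Types (f g h : seq nat -> nat).

Lemma computable_n_succ n f : computable_n n f -> computable_n n (fun v => (f v).+1).
Proof.
apply: computable_n_app1; exists Succ => v /size1 ->; exact: ev_succ.
Qed.

Lemma computable_n_add n f g :
  computable_n n f -> computable_n n g -> computable_n n (fun v => f v + g v).
Proof.
apply: computable_n_app2.
have succ1 : computable_n 3 (fun v => (nth 0 v 1).+1).
  by apply: computable_n_succ; apply: computable_n_proj.
apply: (computable_n_ext (computable_n_iteri (computable_n_proj (ltn0Sn 0)) succ1)).
by move=> v /size2 -> /=; elim: (nth 0 v 0) => //= x ->.
Qed.

Lemma computable_n_mul n f g :
  computable_n n f -> computable_n n g -> computable_n n (fun v => f v * g v).
Proof.
apply: computable_n_app2.
have add12 : computable_n 3 (fun v => nth 0 v 1 + nth 0 v 2).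
  by apply: computable_n_add; apply: computable_n_proj.
apply: (computable_n_ext (computable_n_iteri (computable_n_const 1 0) add12)).
by move=> v /size2 -> /=; elim: (nth 0 v 0) => //= x ->; rewrite mulSn addnC.
Qed.

Lemma computable_n_pred n f : computable_n n f -> computable_n n (fun v => (f v).-1).
Proof.
apply: computable_n_app1.
have proj0 : computable_n 2 (fun v => nth 0 v 0) by apply: computable_n_proj.
apply: (computable_n_ext (computable_n_iteri (computable_n_const 0 0) proj0)).
by move=> v /size1 -> /=; case: (nth 0 v 0).
Qed.

Lemma computable_n_sub n f g :
  computable_n n f -> computable_n n g -> computable_n n (fun v => f v - g v).
Proof.
move=> cf cg; apply: (@computable_n_app2 _ (fun a b => b - a)) cg cf.
have pred1 : computable_n 3 (fun v => (nth 0 v 1).-1).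
  by apply: computable_n_pred; apply: computable_n_proj.
apply: (computable_n_ext (computable_n_iteri (computable_n_proj (ltn0Sn 0)) pred1)).
by move=> v /size2 -> /=; elim: (nth 0 v 0) => [|x /= ->]; rewrite ?subn0 ?subnS.
Qed.

Lemma computable_n_exp2 n f : computable_n n f -> computable_n n (fun v => 2 ^ f v).
Proof.
apply: computable_n_app1.
have double1 : computable_n 2 (fun v => nth 0 v 1 + nth 0 v 1).
  by apply: computable_n_add; apply: computable_n_proj.
apply: (computable_n_ext (computable_n_iteri (computable_n_const 0 1) double1)).
by move=> v /size1 -> /=; elim: (nth 0 v 0) => //= x ->; rewrite expnS mul2n addnn.
Qed.

Lemma computable_n_eq0 n f : computable_n n f -> computable_n n (fun v => f v == 0 : nat).
Proof.
move=> cf; apply: (computable_n_ext (computable_n_sub (computable_n_const n 1) cf)).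
by move=> v _; case: (f v).
Qed.

Lemma computable_n_ifz n h f g : computable_n n h -> computable_n n f -> computable_n n g ->
  computable_n n (fun v => if h v is 0 then f v else g v).
Proof.
move=> ch cf cg; have ch0 := computable_n_eq0 ch.
have cnh0 := computable_n_sub (computable_n_const n 1) ch0.
apply: (computable_n_ext (computable_n_add (computable_n_mul ch0 cf) (computable_n_mul cnh0 cg))).
by move=> v _; case: (h v) => /=; rewrite ?mul1n ?mul0n ?addn0.
Qed.

Lemma computable_n_leq n f g :
  computable_n n f -> computable_n n g -> computable_n n (fun v => f v <= g v : nat).
Proof. by move=> cf cg; apply: (computable_n_eq0 (computable_n_sub cf cg)). Qed.

Lemma computable_n_andb n (b1 b2 : seq nat -> bool) :
  computable_n n (fun v => b1 v : nat) -> computable_n n (fun v => b2 v : nat) ->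
  computable_n n (fun v => b1 v && b2 v : nat).
Proof.
move=> cb1 cb2; apply: (computable_n_ext (computable_n_mul cb1 cb2)).
by move=> v _; case: (b1 v); rewrite ?mul1n.
Qed.

Lemma computable_n_sum n f g : computable_n n.+1 f -> computable_n n g ->
  computable_n n (fun v => \sum_(0 <= i < g v) f (i :: v)).
Proof.
move=> cf cg.
have step : computable_n n.+2 (fun u => nth 0 u 1 + f (nth 0 u 0 :: drop 2 u)).
  apply: computable_n_add; first exact: computable_n_proj.
  apply: (computable_n_drop (F := f) (fs := [:: fun u => nth 0 u 0])) => //.
    by rewrite !subSS subn0.
  by constructor; [exact: computable_n_proj | constructor].
have partial := computable_n_iteri (computable_n_const n 0) step.
have := @computable_n_drop n 0 _ [:: g] (leq0n n); rewrite subn0 add1n.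
move=> /(_ _ partial (List.Forall_cons _ cg (List.Forall_nil _)))/computable_n_ext.
apply=> v _; rewrite drop0 /= drop0.
by elim: (g v) => [|x IHx]; [rewrite big_geq | rewrite big_nat_recr //= IHx].
Qed.

Lemma computable_n_negb n (b : seq nat -> bool) :
  computable_n n (fun v => b v : nat) -> computable_n n (fun v => ~~ b v : nat).
Proof. by move/computable_n_eq0/computable_n_ext; apply=> v _; case: (b v). Qed.

Lemma computable_n_all n (fs : seq (seq nat -> nat)) : List.Forall (computable_n n) fs ->
  computable_n n (fun v => all (fun f => f v != 0) fs : nat).
Proof.
elim=> [|f fs' cf _ IH]; first exact: computable_n_const.
apply: (computable_n_ext (computable_n_ifz cf (computable_n_const n 0) IH)).
by move=> v _ /=; case: (f v).
Qed.

End Arithmetic.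

(** * The step-bounded interpreter is computable *)

Definition encode_option (o : option nat) := if o is Some y then y.+1 else 0.

(* The budget comes first, and [Some y] and [None] are encoded as [y.+1] and [0]. *)
Definition clocked c (sv : seq nat) := encode_option (run (head 0 sv) c (behead sv)).

Lemma all_someE os :
  all_some os = if all isSome os then Some (map (fun o => (encode_option o).-1) os) else None.
Proof. by elim: os => [|[y|] os /= IHos] //; rewrite IHos; case: (all isSome os). Qed.

Lemma clocked_CompE (f : code) gs s v : clocked (Comp f gs) (s :: v) =
  if all (fun g => clocked g (s :: v) != 0) gs
  then clocked f (s :: map (fun g => (clocked g (s :: v)).-1) gs) else 0.
Proof.
rewrite /clocked /= all_someE all_map -map_comp.
have -> : all (preim (run s ^~ v) isSome) gs = all (fun g => encode_option (run s g v) != 0) gs.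
  by apply: eq_all => g /=; case: run.
by case: all.
Qed.

Lemma clocked_PrecE (f g : code) s x v : clocked (Prec f g) [:: s, x & v] =
  iteri x (fun m acc => if acc is 0 then 0 else clocked g [:: s, m, acc.-1 & v])
    (clocked f (s :: v)).
Proof.
rewrite /clocked /=; elim: x => //= x <-.
by case: prec_run.
Qed.

(* The accumulator of the recursion in [clocked_MuE]. *)
Definition encode_state (st : search_state) :=
  match st with Searching => 0 | Stuck => 1 | Found m => m.+2 end.

Lemma clocked_MuE (f : code) s v : clocked (Mu f) (s :: v) =
  (iteri s (fun j acc => if acc is 0 then
       if clocked f [:: s, j & v] is 0 then 1
       else if (clocked f [:: s, j & v]).-1 is 0 then j.+2 else 0
     else acc) 0).-1.
Proof.
suff -> : forall j, iteri j (fun j acc => if acc is 0 then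
       if clocked f [:: s, j & v] is 0 then 1
       else if (clocked f [:: s, j & v]).-1 is 0 then j.+2 else 0
     else acc) 0 = encode_state (search (fun m => run s f (m :: v)) j).
  by rewrite /clocked /=; case: search.
elim=> //= j ->; rewrite /clocked /=.
by case: search => //=; case: run => [[|k]|].
Qed.

Lemma computable_clocked_Comp n (f : code) gs :
  computable_n (size gs).+1 (clocked f) ->
  List.Forall (fun g => computable_n n.+1 (clocked g)) gs ->
  computable_n n.+1 (clocked (Comp f gs)).
Proof.
move=> cf cgs.
have cguard := computable_n_all (proj2 (List.Forall_map _ _ _) cgs).
have cargs : computable_n n.+1
    (fun sv => clocked f (map (fun h => h sv) (head 0 :: map (fun g sv => (clocked g sv).-1) gs))).
  apply: computable_n_comp; first by rewrite /= size_map.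
  constructor; first exact: (computable_n_proj (ltn0Sn n)).
  apply/List.Forall_map; apply: List.Forall_impl cgs => g; exact: computable_n_pred.
apply: (computable_n_ext (computable_n_ifz cguard (computable_n_const _ 0) cargs)).
move=> [|s v] // _; rewrite clocked_CompE all_map /= -map_comp.
by case: all.
Qed.

Lemma computable_clocked_Prec n (f g : code) :
  computable_n n.+1 (clocked f) -> computable_n n.+3 (clocked g) ->
  computable_n n.+2 (clocked (Prec f g)).
Proof.
move=> cf cg.
have cstep : computable_n n.+3 (fun u => if nth 0 u 1 is 0 then 0 else
    clocked g (map (fun h => h u) [:: nth 0 ^~ 2; nth 0 ^~ 0; fun u => (nth 0 u 1).-1]
               ++ drop 3 u)).
  apply: computable_n_ifz; [exact: computable_n_proj | exact: computable_n_const|].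
  apply: computable_n_drop => //; first by rewrite !subSS subn0.
  by do !constructor; try apply: computable_n_pred; apply: computable_n_proj.
have := @computable_n_drop n.+2 2 _ [:: nth 0 ^~ 1; nth 0 ^~ 0] isT.
rewrite !subSS subn0 add2n => /(_ _ (computable_n_iteri cf cstep)).
have cfs : List.Forall (computable_n n.+2) [:: nth 0 ^~ 1; nth 0 ^~ 0].
  by do !constructor; apply: computable_n_proj.
move=> /(_ cfs)/computable_n_ext; apply=> -[|s [|x v]] // _.
by rewrite clocked_PrecE /= !drop0.
Qed.

Lemma computable_clocked_Mu n (f : code) :
  computable_n n.+2 (clocked f) -> computable_n n.+1 (clocked (Mu f)).
Proof.
move=> cf.
pose r u := clocked f (map (fun h => h u) [:: nth 0 ^~ 2; nth 0 ^~ 0] ++ drop 3 u).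
have cr : computable_n n.+3 r.
  apply: computable_n_drop => //; first by rewrite !subSS subn0.
  by do !constructor; apply: computable_n_proj.
have cstep : computable_n n.+3 (fun u => if nth 0 u 1 is 0 then
    if r u is 0 then 1 else if (r u).-1 is 0 then (nth 0 u 0).+2 else 0
  else nth 0 u 1).
  have cacc : computable_n n.+3 (nth 0 ^~ 1) by apply: computable_n_proj.
  apply: (computable_n_ifz cacc _ cacc); apply: (computable_n_ifz cr (computable_n_const _ 1)).
  apply: (computable_n_ifz (computable_n_pred cr) _ (computable_n_const _ 0)).
  by do 2!apply: computable_n_succ; apply: computable_n_proj.
have := @computable_n_drop n.+1 0 _ [:: nth 0 ^~ 0] isT.
rewrite subn0 add1n => /(_ _ (computable_n_iteri (computable_n_const n.+1 0) cstep)).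
have cfs : List.Forall (computable_n n.+1) [:: nth 0 ^~ 0].
  by do !constructor; apply: computable_n_proj.
move=> /(_ cfs)/computable_n_pred/computable_n_ext; apply=> -[|s v] // [sv].
by rewrite clocked_MuE /r /= drop0.
Qed.

Lemma computable_clocked c n : computable_n n.+1 (clocked c).
Proof.
elim/code_nested_ind: c n.
- by move=> n; apply: (computable_n_ext (computable_n_const _ 1)) => -[].
- case=> [|n]; first by apply: (computable_n_ext (computable_n_const _ 0)) => -[|s []].
  have cx := computable_n_proj (n := n.+2) (i := 1) isT.
  apply: (computable_n_ext (computable_n_succ (computable_n_succ cx))).
  by move=> [|s [|x v]].
- move=> i n; case: (ltnP i n) => [lt_in | le_ni].
    apply: (computable_n_ext (computable_n_succ (computable_n_proj (n := n.+1) (i := i.+1) lt_in))).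
    by move=> [|s v] //= [sv]; rewrite /clocked /= sv lt_in.
  apply: (computable_n_ext (computable_n_const _ 0)) => -[|s v] //= [sv].
  by rewrite /clocked /= sv ltnNge le_ni.
- move=> f gs cf cgs n; apply: computable_clocked_Comp => //.
  by apply: List.Forall_impl cgs => g; apply.
- move=> f g cf cg [|n]; last exact: computable_clocked_Prec.
  by apply: (computable_n_ext (computable_n_const _ 0)) => -[|s []].
- by move=> f cf n; apply: computable_clocked_Mu.
Qed.

Lemma clocked_mono c v s s' :
  s <= s' -> clocked c (s :: v) != 0 -> clocked c (s' :: v) != 0.
Proof.
by rewrite /clocked /= => le_ss'; case Es: run => [y|] // _; rewrite (run_mono le_ss' Es).
Qed.

Lemma clocked_haltsP c v : (exists y, ev c v y) <-> exists s, clocked c (s :: v) != 0.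
Proof.
split=> [[y /run_complete [s Es]] | [s]]; first by exists s; rewrite /clocked /= Es.
by rewrite /clocked /=; case Es: run => [y|] // _; exists y; apply: run_sound Es.
Qed.

(** * Density on blocks *)

(* The integer form of [1 - 2^-k <= rho m S], see [rho_dense]. *)
Definition dense_at k (S : pred nat) m := 2 ^ k * (m - count S (iota 0 m)) <= m.

Lemma sub_in_count (T : eqType) (a1 a2 : pred T) s :
  {in s, forall x, a1 x -> a2 x} -> count a1 s <= count a2 s.
Proof.
move=> sub12; rewrite -(@eq_in_count _ (predI a1 a2) a1).
  by apply: sub_count => x /andP[].
by move=> x xs /=; case a1x: (a1 x); rewrite // (sub12 x xs a1x).
Qed.

Lemma dense_at_count k (S1 S2 : pred nat) m :
  count S1 (iota 0 m) <= count S2 (iota 0 m) -> dense_at k S1 m -> dense_at k S2 m.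
Proof. by move=> le_c; apply: leq_trans; rewrite leq_mul2l leq_sub2l ?orbT. Qed.

Section RationalDensity.
Import Order.TTheory GRing.Theory Num.Theory.
Local Open Scope ring_scope.

Lemma rho_dense k S n : (0 < n)%N ->
  (1 - (2%:R ^+ k)^-1 <= rho n S) = dense_at k S n.
Proof.
move=> n_gt0; have le_cn : (count S (iota 0 n) <= n)%N.
  by rewrite -[X in (_ <= X)%N](size_iota 0) count_size.
have p_gt0 : 0 < (2%:R ^+ k : rat) by rewrite exprn_gt0.
rewrite /rho /dense_at ler_pdivlMr ?ltr0n // -(ler_nat rat) natrM natrB // natrX.
rewrite -(ler_pM2l p_gt0) mulrA mulrBr mulr1 (mulfV (lt0r_neq0 p_gt0)) mulrBl mul1r.
by rewrite mulrBr !lerBlDr addrC.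
Qed.

Lemma witnesses_density1E w S :
  witnesses_density1 w S <-> forall k n, (w k <= n)%N -> dense_at k S n.
Proof.
split=> [wS k [|n] le_wn | denseS k n n_gt0 le_wn]; first by rewrite /dense_at sub0n muln0.
  by rewrite -rho_dense // wS.
by rewrite rho_dense // denseS.
Qed.

Lemma has_density1_witnessed w S : witnesses_density1 w S -> has_density1 S.
Proof.
move=> wS eps eps_gt0.
have [K ltK] : exists K, eps^-1 < K%:R.
  by exists (Num.Def.archi_bound eps^-1); apply: archi_boundP; rewrite invr_ge0 ltW.
exists (w K) => n n_gt0 le_wn.
have rho_le1 : rho n S <= 1.
  rewrite /rho ler_pdivrMr ?ltr0n // mul1r ler_nat.
  by rewrite -[X in (_ <= X)%N](size_iota 0) count_size.
have small : (2%:R ^+ K : rat)^-1 < eps.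
  rewrite invf_plt ?posrE ?exprn_gt0 //; apply: (lt_le_trans ltK).
  by rewrite -natrX ler_nat ltnW // ltn_expl.
rewrite ler0_norm ?subr_le0 // opprB; apply: le_lt_trans small.
by rewrite lerBlDr addrC -lerBlDr wS.
Qed.

End RationalDensity.

(* W_(k+1) = 2^k W_k + w k + 1: beyond W_(k+1) the witnessed set is (1 - 2^-k)-dense,
   and W_k is at most a 2^-k fraction of W_(k+1). *)
Definition threshold (w : nat -> nat) k := iteri k (fun j acc => (2 ^ j * acc + w j).+1) 0.

Section Threshold.
Variable w : nat -> nat.
Local Notation W := (threshold w).

Lemma thresholdS k : W k.+1 = (2 ^ k * W k + w k).+1.
Proof. by []. Qed.

Lemma threshold_ltS k : W k < W k.+1.
Proof. by rewrite thresholdS ltnS (leq_trans _ (leq_addr _ _)) // leq_pmull ?expn_gt0. Qed.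

Lemma threshold_ge k : k <= W k.
Proof. by elim: k => // k IHk; apply: leq_ltn_trans IHk (threshold_ltS k). Qed.

Lemma threshold_bracket a n : W a <= n -> exists2 j, a <= j & W j <= n < W j.+1.
Proof.
move=> le_an; have bounded j : W j <= n -> j <= n.
  by move=> /(leq_trans (threshold_ge j)).
have [j le_jn max_j] := ex_maxnP (ex_intro (fun j => W j <= n) a le_an) bounded.
exists j; first exact: max_j.
by rewrite le_jn ltnNge; apply/negP => /max_j; rewrite ltnn.
Qed.

End Threshold.

Section DenseSubset.
Variables (A : pred nat) (As : nat -> pred nat) (w : nat -> nat).
Hypothesis As_mono : forall s s' x, s <= s' -> As s x -> As s' x.
Hypothesis As_exhaust : forall x, A x -> exists s, As s x.
Hypothesis denseA : forall k n, w k <= n -> dense_at k A n.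
Local Notation W := (threshold w).

Definition good_stage k s :=
  forall m, W k.+1 <= m < W k.+2 -> dense_at k (As s) m.

Lemma good_stage_exists k : exists s, good_stage k s.
Proof.
have [s As_s] : exists s, forall y, y < W k.+2 -> A y -> As s y.
  apply: uniform_stage => [s s' y le_ss' AsA /AsA|y _]; first exact: As_mono.
  by case: (boolP (A y)) => [/As_exhaust [s Ass] | _]; [exists s | exists 0].
exists s => m /andP[le_m lt_m]; apply: (@dense_at_count _ A).
  apply: sub_in_count => y; rewrite mem_iota add0n => /andP[_ lt_ym].
  by apply: As_s; apply: ltn_trans lt_ym lt_m.
by apply: denseA; apply: leq_trans le_m; rewrite thresholdS leqW // leq_addl.
Qed.

Variable t : nat -> nat.
Hypothesis good_t : forall k, good_stage k (t k).

Definition diagonal_set x := As (\sum_(0 <= i < x.+1) t i) x.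

Lemma stage_le_sum i y : i <= y -> t i <= \sum_(0 <= j < y.+1) t j.
Proof.
move=> le_iy; rewrite (@big_cat_nat _ _ _ i.+1) //= big_nat_recr //=.
exact: leq_trans (leq_addl _ _) (leq_addr _ _).
Qed.

Lemma count_good_stage i n : W i <= n ->
  count (As (t i)) (iota 0 n) <= W i + count diagonal_set (iota 0 n).
Proof.
move=> le_n; rewrite -(subnKC le_n) iotaD !count_cat.
apply: leq_add; first by rewrite -[X in _ <= X](size_iota 0) count_size.
apply: leq_trans (leq_addl _ _); apply: sub_in_count => y.
rewrite mem_iota add0n => /andP[le_y _] /(As_mono (stage_le_sum _)); apply.
exact: leq_trans (threshold_ge w i) le_y.
Qed.

Lemma diagonal_set_dense K n : W K.+2 <= n -> dense_at K diagonal_set n.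
Proof.
(* [n] lies in a block of index [i > K], where [B] misses at most [W i <= 2^-i n]
   points of the dense set [As (t i)]. *)
move=> le_n; have [[|i] le_Ki /andP[le_i lt_i]] := threshold_bracket le_n; first by [].
have good_n : dense_at i (As (t i)) n by apply: good_t; rewrite le_i lt_i.
have le_cB := count_good_stage (leq_trans (ltnW (threshold_ltS w i)) le_i).
have le_Wi : 2 ^ i * W i <= n by apply: leq_trans le_i; rewrite thresholdS leqW // leq_addr.
have le_exp : 2 * 2 ^ K <= 2 ^ i by rewrite -expnS leq_exp2l.
move: good_n le_cB; rewrite /dense_at.
set cA := count _ _; set cB := count _ _; set P := 2 ^ K; set Q := 2 ^ i.
nia.
Qed.

End DenseSubset.

(** * A computable dense subset of a c.e. set *)

Lemma count_iota_sum (a : pred nat) N : count a (iota 0 N) = \sum_(0 <= y < N) (a y : nat).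
Proof.
rewrite /index_iota subn0 -sum1_count big_mkcond.
by apply: eq_bigr => y _; case: (a y).
Qed.

Lemma computable_n_threshold w n f : computable w -> computable_n n f ->
  computable_n n (fun v => threshold w (f v)).
Proof.
move=> /computable_n1 cw; apply: computable_n_app1.
have cstep : computable_n 2 (fun u => (2 ^ nth 0 u 0 * nth 0 u 1 + w (nth 0 u 0)).+1).
  apply: computable_n_succ; apply: computable_n_add.
    by apply: computable_n_mul; [apply: computable_n_exp2|]; apply: computable_n_proj.
  by apply: computable_n_app1 cw _; apply: computable_n_proj.
apply: (computable_n_ext (computable_n_iteri (computable_n_const 0 0) cstep)).
by move=> v /size1 ->.
Qed.

Section ComputableDenseSubset.
Variables (A : pred nat) (E : nat -> nat -> nat) (w : nat -> nat).
Hypothesis cE : computable_n 2 (fun v => E (nth 0 v 0) (nth 0 v 1)).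
Hypothesis cw : computable w.
Hypothesis wA : witnesses_density1 w A.
Hypothesis E_sub : forall s x, E s x != 0 -> A x.
Hypothesis E_exhaust : forall x, A x -> exists s, E s x != 0.
Hypothesis E_mono : forall s s' x, s <= s' -> E s x != 0 -> E s' x != 0.

Let stage s x := E s x != 0.
Local Notation W := (threshold w).

Lemma computable_n_stage_count n f g : computable_n n f -> computable_n n g ->
  computable_n n (fun v => count (stage (f v)) (iota 0 (g v))).
Proof.
move=> cf cg.
have cstage : computable_n n.+1 (fun u => stage (f (behead u)) (nth 0 u 0) : nat).
  apply/computable_n_negb/computable_n_eq0/computable_n_app2 => //.
    exact: computable_n_behead.
  exact: computable_n_proj.
by apply: (computable_n_ext (computable_n_sum cstage cg)) => v _; rewrite count_iota_sum.
Qed.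

Definition bad_count s k :=
  \sum_(0 <= m < W k.+2) ((W k.+1 <= m) && ~~ dense_at k (stage s) m : nat).

Lemma bad_countP s k : reflect (good_stage stage w k s) (bad_count s k == 0).
Proof.
rewrite sum_nat_seq_eq0; apply: (iffP idP) => [/allP good m /andP[le_m lt_m] | good].
  by move: (good m); rewrite mem_index_iota lt_m le_m eqb0 negbK; apply.
apply/allP => m; rewrite mem_index_iota => /andP[_ lt_m] /=.
by case: leqP => //= le_m; rewrite eqb0 negbK good ?le_m.
Qed.

Lemma computable_n_bad_count :
  computable_n 2 (fun v => bad_count (nth 0 v 0) (nth 0 v 1)).
Proof.
pose bad u := (W (nth 0 u 2).+1 <= nth 0 u 0) &&
  ~~ dense_at (nth 0 u 2) (stage (nth 0 u 1)) (nth 0 u 0).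
have cbad : computable_n 3 (fun u => bad u : nat).
  apply: computable_n_andb.
    apply: computable_n_leq; last exact: computable_n_proj.
    by apply: computable_n_threshold => //; apply: computable_n_succ; apply: computable_n_proj.
  apply: computable_n_negb; apply: computable_n_leq; last exact: computable_n_proj.
  apply: computable_n_mul; first by apply: computable_n_exp2; apply: computable_n_proj.
  apply: computable_n_sub; first exact: computable_n_proj.
  by apply: computable_n_stage_count; apply: computable_n_proj.
have cend : computable_n 2 (fun v => W (nth 0 v 1).+2).
  by apply: computable_n_threshold => //; do 2!apply: computable_n_succ; apply: computable_n_proj.
by apply: (computable_n_ext (computable_n_sum cbad cend)) => v /size2 ->.
Qed.

Lemma bad_count_vanishes k : exists s, bad_count s k == 0.
Proof.
have [s good] := good_stage_exists E_mono E_exhaust (proj1 (witnesses_density1E w A) wA) k.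
by exists s; apply/bad_countP.
Qed.

Definition least_good_stage k := ex_minn (bad_count_vanishes k).

Lemma least_good_stageP k : good_stage stage w k (least_good_stage k).
Proof. by apply/bad_countP; rewrite /least_good_stage; case: ex_minnP. Qed.

Lemma computable_least_good_stage : computable least_good_stage.
Proof.
apply/computable_n1/(computable_n_mu computable_n_bad_count) => v /size1 -> /=.
rewrite /least_good_stage; case: ex_minnP => s /eqP -> min_s; split=> // m lt_ms.
by apply/negP => /min_s; rewrite leqNgt lt_ms.
Qed.

Theorem dense_computable_subset :
  exists B : pred nat, {subset B <= A} /\ computable_set B /\ density1_effectively B.
Proof.
pose B := diagonal_set stage least_good_stage.
have wB : witnesses_density1 (fun K => W K.+2) B.
  by apply/witnesses_density1E => K n; apply: (diagonal_set_dense E_mono least_good_stageP).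
exists B; split; first by move=> x /E_sub.
split.
  apply/computable_n1/computable_n_negb/computable_n_eq0/computable_n_app2 => //.
    apply: (computable_n_sum (f := fun u => least_good_stage (nth 0 u 0))).
      apply: computable_n_app1; last exact: computable_n_proj.
      exact/computable_n1/computable_least_good_stage.
    by apply: computable_n_succ; apply: computable_n_proj.
  exact: computable_n_proj.
split; first exact: has_density1_witnessed wB.
exists (fun K => W K.+2); split=> //.
apply/computable_n1/computable_n_threshold => //.
by do 2!apply: computable_n_succ; apply: computable_n_proj.
Qed.

End ComputableDenseSubset.

Theorem mainTheorem11 (A : pred nat) :
  ce A -> density1_effectively A ->
  exists B : pred nat,
    {subset B <= A} /\ computable_set B /\ density1_effectively B.
Proof.
move=> [c haltsA] [_ [w [cw wA]]].
apply: (@dense_computable_subset A (fun s x => clocked c [:: s; x]) w) => //.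
- by apply: (computable_n_ext (computable_clocked c 1)) => v /size2 ->.
- by move=> s x halts; apply/haltsA/clocked_haltsP; exists s.
- by move=> x /haltsA /clocked_haltsP.
- by move=> s s' x; apply: clocked_mono.
Qed.
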